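(* Let $G$ be a graph and $S\subseteq V(G)$. Let $H$ be a graph with $\partial(S)\subseteq V(H)$ and $V(H)\cap(V(G)\setminus S)=\emptyset$ such that $B_{G[S]}(\partial(S))=B_H(\partial(S))$, and let $G'$ be the graph obtained from $G$ by replacing $G[S]$ with $H$ (that is, $V(G')=(V(G)\setminus S)\cup V(H)$ and $E(G')$ consists of the edges of $G$ not having both endpoints in $S$ together with $E(H)$). Then for any proper $2$-coloring $K$ of $G$, the restriction $K|_{(V(G)\setminus S)\cup\partial(S)}$ can be extended to a proper $2$-coloring of $G'$, and for any proper $2$-coloring $K'$ of $G'$, the restriction $K'|_{(V(G)\setminus S)\cup\partial(S)}$ can be extended to a proper $2$-coloring of $G$.
   Context: $\partial(S)$ is the set of vertices of $S$ having at least one neighbor in $V(G)\setminus S$. For a graph $X$ and $T\subseteq V(X)$, $B_X(T)$ is the set of subsets $T'\subseteq T$ such that there is a bipartition of $X$ (proper $2$-coloring) with all of $T'$ in one part and all of $T\setminus T'$ in the other; $B_X(T)=\emptyset$ if $X$ is not bipartite. *)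

From mathcomp Require Import all_boot.
Set Implicit Arguments. Unset Strict Implicit. Unset Printing Implicit Defensive.

Record sgraph (U : finType) := SGraph {
  verts : {set U};
  adj : rel U;
  adj_sym : symmetric adj;
  adj_irr : irreflexive adj;
  adj_verts : forall x y, adj x y -> (x \in verts) && (y \in verts)
}.

Section Defs.
Variable U : finType.

Definition proper2 (e : rel U) (c : U -> bool) : Prop :=
  forall x y, e x y -> c x != c y.

Definition boundary (G : sgraph U) (S : {set U}) : {set U} :=
  [set x in S | [exists y, adj G x y && (y \notin S)]].

Definition induced_adj (G : sgraph U) (S : {set U}) : rel U :=
  fun x y => [&& adj G x y, x \in S & y \in S].

(* T' \in B_X(T), for X given by its edge relation e:
   some proper 2-colouring puts T' in one part and T \ T' in the other. *)
Definition inB (e : rel U) (T T' : {set U}) : Prop :=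
  T' \subset T /\
  exists c : U -> bool, proper2 e c /\
    (forall x, x \in T' -> c x = true) /\
    (forall x, x \in T :\: T' -> c x = false).

Definition replace_verts (G H : sgraph U) (S : {set U}) : {set U} :=
  (verts G :\: S) :|: verts H.
Definition replace_adj (G H : sgraph U) (S : {set U}) : rel U :=
  fun x y => (adj G x y && ~~ ((x \in S) && (y \in S))) || adj H x y.

End Defs.

From mathcomp Require Import all_boot.

Set Implicit Arguments.
Unset Strict Implicit.
Unset Printing Implicit Defensive.

(* Both directions are the same gluing argument.  The boundary classes that a
   proper 2-colouring induces on one side are, by the hypothesis on B, also
   realised by some proper 2-colouring of the other side; that colouring agrees
   with the given one on the boundary, so it can be glued to the given colouring
   outside, since every edge leaving the replaced part starts at a boundary
   vertex. *)

Section Colourings.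
Variable U : finType.

Definition glue (A : {set U}) (cin cout : U -> bool) : U -> bool :=
  fun x => if x \in A then cin x else cout x.

Lemma proper2_sub (e1 e2 : rel U) (c : U -> bool) :
  subrel e1 e2 -> proper2 e2 c -> proper2 e1 c.
Proof. by move=> e12 pc x y /e12; apply: pc. Qed.

Lemma inB_colour_class (e : rel U) (T : {set U}) (c : U -> bool) :
  proper2 e c -> inB e T [set x in T | c x].
Proof.
move=> pc; split; first by apply/subsetP=> x; rewrite inE => /andP[].
exists c; split=> //; split=> x; first by rewrite inE => /andP[].
by rewrite !inE => /andP[+ xT]; rewrite xT; apply: negbTE.
Qed.

Lemma inB_colour_class_realised (e : rel U) (T : {set U}) (c : U -> bool) :
  inB e T [set x in T | c x] -> exists2 d, proper2 e d & {in T, d =1 c}.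
Proof.
move=> [_ [d [pd [dT dF]]]]; exists d => // x xT.
by case cx: (c x); [apply: dT | apply: dF]; rewrite !inE xT cx.
Qed.

Lemma proper2_transfer (e1 e2 : rel U) (T : {set U}) (c : U -> bool) :
  (forall T', inB e1 T T' -> inB e2 T T') -> proper2 e1 c ->
  exists2 d, proper2 e2 d & {in T, d =1 c}.
Proof. by move=> B12 /(inB_colour_class T) /B12 /inB_colour_class_realised. Qed.

Lemma glue_proper2 (e : rel U) (A B : {set U}) (cin cout : U -> bool) :
  symmetric e ->
  (forall x y, e x y -> x \in A -> y \notin A -> x \in B) ->
  {in B, cin =1 cout} ->
  proper2 [rel x y | [&& e x y, x \in A & y \in A]] cin ->
  proper2 [rel x y | e x y && ~~ ((x \in A) && (y \in A))] cout ->
  proper2 e (glue A cin cout).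
Proof.
move=> esym cross eqB pin pout x y exy; rewrite /glue.
case: ifP => xA; case: ifP => yA.
- by apply: pin; rewrite /= exy xA yA.
- have xB : x \in B by apply: (cross x y); rewrite ?yA.
  by rewrite eqB //; apply: pout; rewrite /= exy xA yA.
- have yB : y \in B by apply: (cross y x); [rewrite esym | | rewrite xA].
  by rewrite (eqB y) //; apply: pout; rewrite /= exy xA.
- by apply: pout; rewrite /= exy xA.
Qed.

End Colourings.

Section Replacement.
Variables (U : finType) (G H : sgraph U) (S : {set U}).

Lemma mem_boundary (x y : U) :
  adj G x y -> x \in S -> y \notin S -> x \in boundary G S.
Proof. by move=> xy xS yS; rewrite inE xS; apply/existsP; exists y; rewrite xy. Qed.

Lemma replace_adj_sym : symmetric (replace_adj G H S).
Proof.
by move=> x y; rewrite /replace_adj (adj_sym G x) (adj_sym H x) [(y \in S) && _]andbC.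
Qed.

Lemma replace_adj_outside (x y : U) :
  replace_adj G H S x y -> ~~ ((x \in verts H) && (y \in verts H)) ->
  adj G x y && ~~ ((x \in S) && (y \in S)).
Proof. by case/orP=> // /adj_verts ->. Qed.

Lemma proper2_unreplace (K' c : U -> bool) :
  proper2 (replace_adj G H S) K' -> proper2 (induced_adj G S) c ->
  {in boundary G S, c =1 K'} -> proper2 (adj G) (glue S c K').
Proof.
move=> pK' pc cK'; apply: glue_proper2 cK' pc _.
- exact: adj_sym.
- exact: mem_boundary.
- by apply: proper2_sub pK' => x y Gxy; apply/orP; left.
Qed.

Hypothesis disH : [disjoint verts H & verts G :\: S].

Lemma vertsHG_in_S (x : U) : x \in verts H -> x \in verts G -> x \in S.
Proof.
move=> xH xG; apply: contraFT (disjointFr disH xH) => xS.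
by rewrite inE xS.
Qed.

Lemma replace_adj_inside (x y : U) :
  replace_adj G H S x y -> x \in verts H -> y \in verts H -> adj H x y.
Proof.
case/orP=> // /andP[xy]; have /andP[xG yG] := adj_verts xy.
by move=> nS xH yH; rewrite !vertsHG_in_S in nS.
Qed.

Lemma replace_adj_cross (x y : U) :
  replace_adj G H S x y -> x \in verts H -> y \notin verts H ->
  x \in boundary G S.
Proof.
move=> xy xH yH.
have nH : ~~ ((x \in verts H) && (y \in verts H)) by rewrite (negbTE yH) andbF.
case/andP: (replace_adj_outside xy nH) => Gxy nS.
have /andP[xG _] := adj_verts Gxy.
have xS : x \in S := vertsHG_in_S xH xG.
by apply: (mem_boundary Gxy xS); rewrite xS in nS.
Qed.

Lemma proper2_replace (K c : U -> bool) :
  proper2 (adj G) K -> proper2 (adj H) c -> {in boundary G S, c =1 K} ->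
  proper2 (replace_adj G H S) (glue (verts H) c K).
Proof.
move=> pK pc cK; apply: glue_proper2 cK _ _.
- exact: replace_adj_sym.
- exact: replace_adj_cross.
- by move=> x y /and3P[xy xH yH]; apply: pc; apply: replace_adj_inside.
- by move=> x y /andP[xy /(replace_adj_outside xy) /andP[Gxy _]]; apply: pK.
Qed.

End Replacement.

Theorem lemma5p5 (U : finType) (G H : sgraph U) (S : {set U}) :
  S \subset verts G ->
  boundary G S \subset verts H ->
  [disjoint verts H & verts G :\: S] ->
  (forall T' : {set U},
     inB (induced_adj G S) (boundary G S) T' <-> inB (adj H) (boundary G S) T') ->
  (forall K : U -> bool, proper2 (adj G) K ->
     exists K' : U -> bool, proper2 (replace_adj G H S) K' /\
       (forall x, x \in (verts G :\: S) :|: boundary G S -> K' x = K x)) /\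
  (forall K' : U -> bool, proper2 (replace_adj G H S) K' ->
     exists K : U -> bool, proper2 (adj G) K /\
       (forall x, x \in (verts G :\: S) :|: boundary G S -> K x = K' x)).
Proof.
move=> _ bH disH eqB; split.
- move=> K pK.
  have pK_S : proper2 (induced_adj G S) K by apply: proper2_sub pK => x y /and3P[].
  have [c pc cK] := proper2_transfer (fun T' => (eqB T').1) pK_S.
  exists (glue (verts H) c K); split; first exact: proper2_replace pK pc cK.
  move=> x; rewrite /glue inE => /orP[xGS | xB].
  + by rewrite (disjointFl disH xGS).
  + by rewrite (subsetP bH x xB) cK.
- move=> K' pK'.
  have pK'_H : proper2 (adj H) K'.
    by apply: proper2_sub pK' => x y Hxy; rewrite /replace_adj Hxy orbT.
  have [c pc cK'] := proper2_transfer (fun T' => (eqB T').2) pK'_H.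
  exists (glue S c K'); split; first exact: proper2_unreplace pK' pc cK'.
  move=> x; rewrite /glue inE => /orP[xGS | xB].
  + by move: xGS; rewrite inE => /andP[/negbTE ->].
  + by move: (xB); rewrite inE => /andP[-> _]; apply: cK'.
Qed.
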